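(* Let $n \ge 1$. A general cubic form $p \in H_3(\mathbb{C}^n)$ has a unique representation $$p(x_1,\dots,x_n) = \sum_{1 \le i \le j \le n} \bigl(t_{\{i,j\},i}x_i + t_{\{i,j\},i+1}x_{i+1} + \cdots + t_{\{i,j\},j}x_j\bigr)^3,$$ with $t_{\{i,j\},k} \in \mathbb{C}$. Thus for each pair $i \le j$ the linear form cubed involves only the variables $x_i,\dots,x_j$.
   Context: $H_d(\mathbb{C}^n)$ denotes the complex vector space of homogeneous polynomials (forms) of degree $d$ in $x_1,\dots,x_n$. ''A general $p$ has property P'' means P holds for all $p$ in a nonempty Zariski-open subset of $H_d(\mathbb{C}^n)$. Representations are counted up to permutation of like summands. A summand $f^k$ is identified with $(\zeta f)^k$ whenever $\zeta^k=1$. *)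

From HB Require Import structures.
From mathcomp Require Import all_boot all_order all_algebra.
Set Implicit Arguments. Unset Strict Implicit. Unset Printing Implicit Defensive.
Import Order.TTheory GRing.Theory Num.Theory.
Local Open Scope ring_scope.

(* Monomials of degree 3 in x_0..x_{n-1}: x_a x_b x_c with a <= b <= c. *)
Definition Mon (n : nat) : finType :=
  {m : 'I_n * 'I_n * 'I_n | ((m.1.1 <= m.1.2) && (m.1.2 <= m.2))%N}.

(* A cubic form in H_3(C^n) = its coefficient vector (coordinates on H_3). *)
Definition cform (C : Type) (n : nat) := Mon n -> C.

Definition eval_form (C : numClosedFieldType) (n : nat) (p : cform C n)
  (x : 'I_n -> C) : C :=
  \sum_(m : Mon n) p m * x (val m).1.1 * x (val m).1.2 * x (val m).2.

Inductive polyexpr (V : Type) (R : Type) : Type :=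
| PVar of V
| PConst of R
| PAdd of polyexpr V R & polyexpr V R
| PMul of polyexpr V R & polyexpr V R.

Fixpoint peval (V : Type) (R : nzRingType) (e : polyexpr V R) (v : V -> R) : R :=
  match e with
  | PVar i => v i
  | PConst c => c
  | PAdd a b => peval a v + peval b v
  | PMul a b => peval a v * peval b v
  end.

(* "A general p has property P": P holds on a nonempty Zariski-open subset of
   H_3(C^n), i.e. on some basic open set {Q <> 0} with Q a polynomial in the
   coefficients that is not identically zero. *)
Definition general (C : numClosedFieldType) (n : nat) (P : cform C n -> Prop) : Prop :=
  exists Q : polyexpr (Mon n) C,
    (exists p0 : cform C n, peval Q p0 != 0) /\
    forall p : cform C n, peval Q p != 0 -> P p.

Definition linf (C : numClosedFieldType) (n : nat) (T : 'I_n -> 'I_n -> 'I_n -> C)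
  (i j : 'I_n) (x : 'I_n -> C) : C :=
  \sum_(k < n | ((i <= k) && (k <= j))%N) T i j k * x k.

Definition is_rep (C : numClosedFieldType) (n : nat) (p : cform C n)
  (T : 'I_n -> 'I_n -> 'I_n -> C) : Prop :=
  forall x : 'I_n -> C,
    eval_form p x = \sum_(i < n) \sum_(j < n | (i <= j)%N) (linf T i j x) ^+ 3.

(* Unique representation: one exists, and any other one has, for every pair
   i <= j, the same cubed summand, i.e. its linear form differs by a cube root
   of unity zeta. *)
Definition unique_rep (C : numClosedFieldType) (n : nat) (p : cform C n) : Prop :=
  exists T, is_rep p T /\
    forall T', is_rep p T' ->
      forall i j : 'I_n, (i <= j)%N ->
        exists zeta : C, zeta ^+ 3 = 1 /\
          forall k : 'I_n, ((i <= k) && (k <= j))%N -> T' i j k = zeta * T i j k.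

From HB Require Import structures.
From mathcomp Require Import all_boot all_order all_algebra.
From mathcomp Require Import ring zify.
From Stdlib Require Import FunctionalExtensionality.
Set Implicit Arguments. Unset Strict Implicit. Unset Printing Implicit Defensive.
Import Order.TTheory GRing.Theory Num.Theory.
Local Open Scope ring_scope.

(* For coefficients t, let gram t a b c be the sum, over the pairs (i, j) whose
   range [i, j] contains a, b, c, of t_{ij,a} t_{ij,b} t_{ij,c}.  Expanding the
   cubes, the coefficient of x_a x_b x_c (a <= b <= c) in the representation is
   mult a b c * gram t a b c, mult being the number of orderings of (a, b, c).
   In gram t i l j (i <= l <= j) the pair (i, j) contributes t_{ij,i} t_{ij,l}
   t_{ij,j}; every other pair is strictly wider.  The system is therefore
   triangular when pairs are processed by decreasing width j - i:
   - existence: pair (i, j) is solved from the residual coefficients of the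
     monomials x_i x_l x_j; this needs the residuals of x_i^2 x_j and x_i x_j^2
     to be nonzero, and a cube root;
   - uniqueness: two representations of p have the same gram values (by
     polarization), so by induction on decreasing width the products
     t_i t_l t_j of each pair agree, which determines the linear form up to a
     cube root of unity;
   - genericity: the residuals are rational functions of the coefficients of p,
     equal to 3 at the form whose representation has all t = 1, hence nonzero
     on a nonempty basic Zariski-open set. *)

Section Symmetrization.
Variable R : comRingType.

(* Number of orderings of a sorted pair, resp. of a sorted triple. *)
Definition mult2 (a b : nat) : R := if a == b then 1 else 2%:R.
Definition mult3 (a b c : nat) : R :=
  if a == c then 1 else if (a == b) || (b == c) then 3%:R else 6%:R.

Lemma sum_sym2_sorted (h : nat -> nat -> R) (hs : forall a b, h a b = h b a) N :
  \sum_(0 <= a < N) \sum_(0 <= b < N) h a b =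
  \sum_(0 <= a < N) \sum_(0 <= b < N) (if (a <= b)%N then mult2 a b * h a b else 0).
Proof.
elim: N => [|N IH]; first by rewrite !big_geq.
rewrite !big_nat_recr //=.
under eq_bigr => a _ do rewrite big_nat_recr //=.
under [X in _ = X + _]eq_bigr => a _ do rewrite big_nat_recr //=.
rewrite !big_split /= IH.
have last_col : \sum_(0 <= i < N) (if (i <= N)%N then mult2 i N * h i N else 0) =
                2%:R * \sum_(0 <= i < N) h i N.
  rewrite big_distrr /=; apply: eq_big_nat => i /andP[_ iN].
  by rewrite (ltnW iN) /mult2 (ltn_eqF iN).
have last_row : \sum_(0 <= i < N) (if (N <= i)%N then mult2 N i * h N i else 0) = 0.
  by rewrite big1_seq // => i; rewrite mem_index_iota => /andP[_ /andP[_ iN]];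
     rewrite leqNgt iN.
have row_col : \sum_(0 <= i < N) h N i = \sum_(0 <= i < N) h i N.
  by apply: eq_bigr => i _; rewrite hs.
rewrite last_col last_row row_col leqnn /mult2 eqxx mul1r; ring.
Qed.

Lemma sum3_split_last (F : nat -> nat -> nat -> R) N :
  \sum_(0 <= a < N.+1) \sum_(0 <= b < N.+1) \sum_(0 <= c < N.+1) F a b c =
  \sum_(0 <= a < N) \sum_(0 <= b < N) \sum_(0 <= c < N) F a b c
  + \sum_(0 <= a < N) \sum_(0 <= b < N) F a b N
  + \sum_(0 <= a < N) \sum_(0 <= c < N) F a N c
  + \sum_(0 <= a < N) F a N N
  + \sum_(0 <= b < N) \sum_(0 <= c < N) F N b c
  + \sum_(0 <= b < N) F N b N
  + \sum_(0 <= c < N) F N N c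
  + F N N N.
Proof.
have recr (G : nat -> R) M : \sum_(0 <= i < M.+1) G i = \sum_(0 <= i < M) G i + G M.
  by rewrite big_nat_recr.
have split2 a : \sum_(0 <= b < N.+1) \sum_(0 <= c < N.+1) F a b c =
   \sum_(0 <= b < N) \sum_(0 <= c < N) F a b c + \sum_(0 <= b < N) F a b N
   + \sum_(0 <= c < N) F a N c + F a N N.
  rewrite recr (eq_bigr _ (fun b _ => recr (F a b) N)) recr big_split /=; ring.
rewrite (eq_bigr _ (fun a _ => split2 a)) recr !big_split /=; ring.
Qed.

Lemma sum_sym3_sorted (g : nat -> nat -> nat -> R)
  (g12 : forall a b c, g a b c = g b a c) (g23 : forall a b c, g a b c = g a c b) N :
  \sum_(0 <= a < N) \sum_(0 <= b < N) \sum_(0 <= c < N) g a b c =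
  \sum_(0 <= a < N) \sum_(0 <= b < N) \sum_(0 <= c < N)
     (if (a <= b <= c)%N then mult3 a b c * g a b c else 0).
Proof.
elim: N => [|N IH]; first by rewrite !big_geq.
rewrite !sum3_split_last IH.
set Y := \sum_(0 <= a < N) \sum_(0 <= b < N) g a b N.
set Z := \sum_(0 <= a < N) g a N N.
have Y_aNc : \sum_(0 <= a < N) \sum_(0 <= c < N) g a N c = Y.
  by apply: eq_bigr => a _; apply: eq_bigr => c _; rewrite g23.
have Y_Nbc : \sum_(0 <= b < N) \sum_(0 <= c < N) g N b c = Y.
  by apply: eq_bigr => a _; apply: eq_bigr => c _; rewrite g12 g23.
have Z_NbN : \sum_(0 <= b < N) g N b N = Z.
  by apply: eq_bigr => a _; rewrite g12.
have Z_NNc : \sum_(0 <= c < N) g N N c = Z.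
  by apply: eq_bigr => a _; rewrite g12 g23.
have sorted_abN : \sum_(0 <= a < N) \sum_(0 <= b < N)
     (if (a <= b <= N)%N then mult3 a b N * g a b N else 0) = 3%:R * Y.
  rewrite /Y (sum_sym2_sorted (h := fun a b => g a b N)); last by move=> a b; rewrite g12.
  rewrite big_distrr /=; apply: eq_big_nat => a /andP[_ aN].
  rewrite big_distrr /=; apply: eq_big_nat => b /andP[_ bN].
  rewrite (ltnW bN) andbT /mult3 /mult2 (ltn_eqF aN) (ltn_eqF bN) orbF.
  case: (a <= b)%N; last by rewrite mulr0.
  by case: (a == b); rewrite /=; ring.
have sorted_aNc : \sum_(0 <= a < N) \sum_(0 <= c < N)
     (if (a <= N <= c)%N then mult3 a N c * g a N c else 0) = 0.
  apply: big1_seq => a _; apply: big1_seq => c; rewrite mem_index_iota.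
  by move=> /andP[_ /andP[_ cN]]; rewrite [(N <= c)%N]leqNgt cN andbF.
have sorted_aNN : \sum_(0 <= a < N)
     (if (a <= N <= N)%N then mult3 a N N * g a N N else 0) = 3%:R * Z.
  rewrite /Z big_distrr /=; apply: eq_big_nat => a /andP[_ aN].
  by rewrite (ltnW aN) leqnn /mult3 (ltn_eqF aN) eqxx orbT.
have sorted_Nbc : \sum_(0 <= b < N) \sum_(0 <= c < N)
     (if (N <= b <= c)%N then mult3 N b c * g N b c else 0) = 0.
  apply: big1_seq => b; rewrite mem_index_iota => /andP[_ /andP[_ bN]].
  by apply: big1_seq => c _; rewrite [(N <= b)%N]leqNgt bN.
have sorted_NbN :
    \sum_(0 <= b < N) (if (N <= b <= N)%N then mult3 N b N * g N b N else 0) = 0.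
  apply: big1_seq => b; rewrite mem_index_iota => /andP[_ /andP[_ bN]].
  by rewrite [(N <= b)%N]leqNgt bN.
have sorted_NNc :
    \sum_(0 <= c < N) (if (N <= N <= c)%N then mult3 N N c * g N N c else 0) = 0.
  apply: big1_seq => c; rewrite mem_index_iota => /andP[_ /andP[_ cN]].
  by rewrite [(N <= c)%N]leqNgt cN andbF.
rewrite Y_aNc Y_Nbc Z_NbN Z_NNc sorted_abN sorted_aNc sorted_aNN sorted_Nbc
  sorted_NbN sorted_NNc leqnn /mult3 eqxx mul1r /=; ring.
Qed.

End Symmetrization.

Section Expansion.
Variable C : numClosedFieldType.
Variable n : nat.
Local Notation I := 'I_n.

Definition extend3 (H : I -> I -> I -> C) (a b c : nat) : C :=
  match (insub a : option I), (insub b : option I), (insub c : option I) with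
  | Some x, Some y, Some z => H x y z | _, _, _ => 0 end.

Lemma extend3E H (x y z : I) : extend3 H x y z = H x y z.
Proof. by rewrite /extend3 !valK. Qed.

Lemma sum3_ord_nat (F : nat -> nat -> nat -> C) :
  \sum_(x < n) \sum_(y < n) \sum_(z < n) F x y z =
  \sum_(0 <= a < n) \sum_(0 <= b < n) \sum_(0 <= c < n) F a b c.
Proof.
rewrite big_mkord; apply: eq_bigr => x _; rewrite big_mkord.
by apply: eq_bigr => y _; rewrite big_mkord.
Qed.

Lemma sum_sym3_sorted_ord (H : I -> I -> I -> C)
  (H12 : forall a b c, H a b c = H b a c) (H23 : forall a b c, H a b c = H a c b) :
  \sum_(a < n) \sum_(b < n) \sum_(c < n) H a b c =
  \sum_(a < n) \sum_(b < n) \sum_(c < n)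
     (if (a <= b <= c)%N then mult3 C a b c * H a b c else 0).
Proof.
pose sorted_ext (a b c : nat) :=
  if (a <= b <= c)%N then mult3 C a b c * extend3 H a b c else 0.
transitivity (\sum_(a < n) \sum_(b < n) \sum_(c < n) extend3 H a b c).
  by do 3!(apply: eq_bigr => ? _); rewrite extend3E.
transitivity (\sum_(a < n) \sum_(b < n) \sum_(c < n) sorted_ext a b c);
  last by do 3!(apply: eq_bigr => ? _); rewrite /sorted_ext extend3E.
rewrite sum3_ord_nat (sum3_ord_nat sorted_ext); apply: sum_sym3_sorted => a b c;
  rewrite /extend3; case: (insub a : option I) => [x|]; case: (insub b : option I) => [y|];
  case: (insub c : option I) => [z|] //.
Qed.

Lemma sum_Mon (F : I * I * I -> C) :
  \sum_(m : Mon n) F (val m) =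
  \sum_(a < n) \sum_(b < n) \sum_(c < n) (if (a <= b <= c)%N then F (a, b, c) else 0).
Proof.
rewrite pair_big /= pair_big /= -big_mkcond /=.
rewrite (reindex_omap (val : Mon n -> I * I * I) insub) /=; last first.
  by move=> t Pt; rewrite insubT.
apply: eq_big => [x|x _]; first by rewrite valK eqxx andbT; case: x => -[[a b] c].
by case: x => -[[a b] c].
Qed.

Definition in_range (i j k : I) : bool := (i <= k <= j)%N.
Definition tcoef (t : I -> I -> I -> C) i j k : C := if in_range i j k then t i j k else 0.

Definition gram t (a b c : I) : C :=
  \sum_(i < n) \sum_(j < n | (i <= j)%N) tcoef t i j a * tcoef t i j b * tcoef t i j c.

Definition rep_value t (x : I -> C) : C :=
  \sum_(i < n) \sum_(j < n | (i <= j)%N) (linf t i j x) ^+ 3.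

Lemma linfE t i j x : linf t i j x = \sum_(k < n) tcoef t i j k * x k.
Proof.
rewrite /linf big_mkcond; apply: eq_bigr => k _; rewrite /tcoef /in_range.
by case: ifP => _; rewrite ?mul0r.
Qed.

Lemma cube_sum (a : I -> C) :
  (\sum_(k < n) a k) ^+ 3 = \sum_(k < n) \sum_(l < n) \sum_(m < n) a k * a l * a m.
Proof.
rewrite exprS expr2 big_distrlr big_distrlr /=.
apply: eq_bigr => k _; apply: eq_bigr => l _; rewrite mulr_sumr.
by apply: eq_bigr => m _; rewrite mulrA.
Qed.

Lemma exchange_pair_sum (P : I -> I -> bool) (Z : I -> I -> I -> C) :
  \sum_(i < n) \sum_(j < n | P i j) \sum_(k < n) Z i j k =
  \sum_(k < n) \sum_(i < n) \sum_(j < n | P i j) Z i j k.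
Proof.
transitivity (\sum_(i < n) \sum_(k < n) \sum_(j < n | P i j) Z i j k).
  by apply: eq_bigr => i _; apply: exchange_big.
exact: exchange_big.
Qed.

Lemma rep_value_expand t x :
  rep_value t x = \sum_(k < n) \sum_(l < n) \sum_(m < n) gram t k l m * (x k * x l * x m).
Proof.
transitivity (\sum_(i < n) \sum_(j < n | (i <= j)%N) \sum_(k < n) \sum_(l < n) \sum_(m < n)
   (tcoef t i j k * tcoef t i j l * tcoef t i j m) * (x k * x l * x m)).
  apply: eq_bigr => i _; apply: eq_bigr => j _; rewrite linfE cube_sum.
  by do 3!(apply: eq_bigr => ? _); ring.
rewrite exchange_pair_sum; apply: eq_bigr => k _.
rewrite exchange_pair_sum; apply: eq_bigr => l _.
rewrite exchange_pair_sum; apply: eq_bigr => m _.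
by rewrite /gram mulr_suml; apply: eq_bigr => i _; rewrite mulr_suml.
Qed.

Lemma gram_swap12 t a b c : gram t a b c = gram t b a c.
Proof. by apply: eq_bigr => i _; apply: eq_bigr => j _; ring. Qed.
Lemma gram_swap23 t a b c : gram t a b c = gram t a c b.
Proof. by apply: eq_bigr => i _; apply: eq_bigr => j _; ring. Qed.

Lemma rep_value_sorted t x :
  rep_value t x = \sum_(a < n) \sum_(b < n) \sum_(c < n)
     (if (a <= b <= c)%N then mult3 C a b c * gram t a b c * (x a * x b * x c) else 0).
Proof.
rewrite rep_value_expand sum_sym3_sorted_ord.
- by (do 3!(apply: eq_bigr => ? _)); rewrite !mulrA.
- by move=> a b c; rewrite gram_swap12; ring.
- by move=> a b c; rewrite gram_swap23; ring.
Qed.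

(* The coefficient of x_a x_b x_c in p (0 unless a <= b <= c). *)
Definition coef (p : cform C n) (a b c : I) : C :=
  if (insub (a, b, c) : option (Mon n)) is Some m then p m else 0.

Lemma eval_form_sorted p x :
  eval_form p x = \sum_(a < n) \sum_(b < n) \sum_(c < n)
     (if (a <= b <= c)%N then coef p a b c * (x a * x b * x c) else 0).
Proof.
pose F (u : I * I * I) := coef p u.1.1 u.1.2 u.2 * (x u.1.1 * x u.1.2 * x u.2).
rewrite /eval_form (eq_bigr (fun m => F (val m))); first exact: (sum_Mon F).
by move=> m _; rewrite /F /coef -!surjective_pairing valK !mulrA.
Qed.

End Expansion.

Section RationalNearPoint.
Variable F : fieldType.
Variable V : Type.
Variable p0 : V -> F.
Local Notation pe := (polyexpr V F).

Definition open_at (P : (V -> F) -> Prop) : Prop :=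
  exists Q : pe, peval Q p0 != 0 /\ forall p, peval Q p != 0 -> P p.
Definition rational_at (f : (V -> F) -> F) : Prop :=
  exists num den : pe,
    open_at (fun p => peval den p != 0 /\ f p = peval num p / peval den p).

Lemma open_at_true : open_at (fun _ => True).
Proof. by exists (PConst _ 1); split => //=; rewrite oner_neq0. Qed.

Lemma open_at_and P R : open_at P -> open_at R -> open_at (fun p => P p /\ R p).
Proof.
move=> [Q1 [h1 H1]] [Q2 [h2 H2]]; exists (PMul Q1 Q2); split => /=.
  by rewrite mulf_neq0.
by move=> p; rewrite mulf_eq0 negb_or => /andP[/H1 ? /H2 ?].
Qed.

Lemma open_at_imp (P R : (V -> F) -> Prop) :
  open_at P -> (forall p, P p -> R p) -> open_at R.
Proof. by move=> [Q [h H]] HR; exists Q; split => // p /H /HR. Qed.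

Lemma open_at_all_seq (T : eqType) (s : seq T) (P : T -> (V -> F) -> Prop) :
  (forall t, open_at (P t)) -> open_at (fun p => forall t, t \in s -> P t p).
Proof.
move=> HP; elim: s => [|t s IH]; first by apply: open_at_imp open_at_true _.
apply: open_at_imp (open_at_and (HP t) IH) _ => p [h1 h2] u.
by rewrite in_cons => /orP[/eqP ->|/h2].
Qed.

Lemma open_at_all (T : finType) (P : T -> (V -> F) -> Prop) :
  (forall t, open_at (P t)) -> open_at (fun p => forall t, P t p).
Proof.
move=> HP; apply: open_at_imp (open_at_all_seq (enum T) HP) _ => p H t.
by apply: H; rewrite mem_enum.
Qed.

Lemma open_at_point P : open_at P -> P p0.
Proof. by move=> [Q [h H]]; apply: H. Qed.

Lemma rational_const c : rational_at (fun _ => c).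
Proof.
exists (PConst _ c), (PConst _ 1); apply: open_at_imp open_at_true _ => p _ /=.
by rewrite oner_neq0 divr1.
Qed.

Lemma rational_var v : rational_at (fun p => p v).
Proof.
exists (PVar _ v), (PConst _ 1); apply: open_at_imp open_at_true _ => p _ /=.
by rewrite oner_neq0 divr1.
Qed.

Lemma rational_add f g : rational_at f -> rational_at g -> rational_at (fun p => f p + g p).
Proof.
move=> [nf [df Hf]] [ng [dg Hg]].
exists (PAdd (PMul nf dg) (PMul ng df)), (PMul df dg).
apply: open_at_imp (open_at_and Hf Hg) _ => p [[d1 e1] [d2 e2]] /=.
split; first by rewrite mulf_neq0.
by rewrite e1 e2; field; rewrite d1 d2.
Qed.

Lemma rational_mul f g : rational_at f -> rational_at g -> rational_at (fun p => f p * g p).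
Proof.
move=> [nf [df Hf]] [ng [dg Hg]].
exists (PMul nf ng), (PMul df dg).
apply: open_at_imp (open_at_and Hf Hg) _ => p [[d1 e1] [d2 e2]] /=.
split; first by rewrite mulf_neq0.
by rewrite e1 e2; field; rewrite d1 d2.
Qed.

Lemma rational_eq f g : rational_at g -> (forall p, f p = g p) -> rational_at f.
Proof.
move=> [ng [dg Hg]] Hfg; exists ng, dg.
by apply: open_at_imp Hg _ => p; rewrite Hfg.
Qed.

(* Key step: a rational function nonzero at p0 is nonzero near p0, its
   numerator being a polynomial nonzero at p0. *)
Lemma rational_numerator f : rational_at f -> f p0 != 0 ->
  exists num den : pe, open_at (fun p => peval num p != 0 /\ peval den p != 0 /\
                                         f p = peval num p / peval den p).
Proof.
move=> [nf [df Hf]] h0; exists nf, df.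
have [d0 e0] := open_at_point Hf.
have n0 : peval nf p0 != 0.
  by apply/negP => /eqP e; move: h0; rewrite e0 e mul0r eqxx.
have Hn : open_at (fun p => peval nf p != 0) by exists nf; split.
by apply: open_at_imp (open_at_and Hf Hn) _ => p [[d1 e1] n1].
Qed.

Lemma rational_nonzero f : rational_at f -> f p0 != 0 -> open_at (fun p => f p != 0).
Proof.
move=> Hf /(rational_numerator Hf) [nf [df H]].
by apply: open_at_imp H _ => p [n1 [d1 ->]]; rewrite mulf_neq0 // invr_neq0.
Qed.

Lemma rational_inv f : rational_at f -> f p0 != 0 -> rational_at (fun p => (f p)^-1).
Proof.
move=> Hf /(rational_numerator Hf) [nf [df H]]; exists df, nf.
by apply: open_at_imp H _ => p [n1 [d1 ->]]; rewrite invf_div.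
Qed.

Lemma rational_sum (T : Type) (s : seq T) (P : pred T) (G : T -> (V -> F) -> F) :
  (forall t, P t -> rational_at (G t)) -> rational_at (fun p => \sum_(t <- s | P t) G t p).
Proof.
move=> HG; elim: s => [|t s IH].
  by apply: rational_eq (rational_const 0) _ => p; rewrite big_nil.
case Pt: (P t).
  by apply: rational_eq (rational_add (HG t Pt) IH) _ => p; rewrite big_cons Pt.
by apply: rational_eq IH _ => p; rewrite big_cons Pt.
Qed.

End RationalNearPoint.

(* The linear form of pair (i, j) is stored normalized
   as (s, u) with coefficients cuberoot(s) * u_k, where u_i = 1: only the cubes
   s * u_k u_l u_m enter the representation, so no cube root is needed until
   the end. *)
Section Solver.
Variable C : numClosedFieldType.
Variable n : nat.
Local Notation I := 'I_n.

Definition pairsol := (C * (I -> C))%type.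
Definition mult (a b c : I) : C := mult3 C a b c.
Definition triple (d : pairsol) (k l m : I) : C := d.1 * d.2 k * d.2 l * d.2 m.

(* Solve s u_i u_l u_j = c i l j / mult i l j (i <= l <= j) with u_i = 1, given
   the residual coefficients c of pair (i, j). *)
Definition solve_pair (i j : I) (c : I -> I -> I -> C) : pairsol :=
  if i == j then (c i i i, fun _ => 1)
  else let g1 := c i i j / 3%:R in let g2 := c i j j / 3%:R in
       (g1 ^+ 2 / g2, fun k => if k == i then 1 else if k == j then g2 / g1
                               else c i k j / 6%:R / g1).

Definition width (i j : I) : nat := (j - i)%N.

Definition wider (i j i' j' k m : I) : bool :=
  [&& (i' <= j')%N, (i' <= k)%N, (m <= j')%N & (width i j < width i' j')%N].

Definition residual (sol : I -> I -> pairsol) (p : cform C n) (i j : I) (k l m : I) : C :=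
  coef p k l m -
  mult k l m * \sum_(i' < n) \sum_(j' < n | wider i j i' j' k m) triple (sol i' j') k l m.

(* f rounds of solving every pair from the previous round; pairs of width
   >= n - f are correct after f rounds, so n rounds solve everything. *)
Fixpoint solve_iter (f : nat) (p : cform C n) : I -> I -> pairsol :=
  if f is f'.+1 then fun i j => solve_pair i j (residual (solve_iter f' p) p i j)
  else fun _ _ => (0, fun _ => 0).
Definition solve p := solve_iter n p.

Lemma residual_ext (sol1 sol2 : I -> I -> pairsol) p i j :
  (forall i' j' k m, wider i j i' j' k m -> sol1 i' j' = sol2 i' j') ->
  residual sol1 p i j = residual sol2 p i j.
Proof.
move=> h; do 3!(apply: functional_extensionality => ?); rewrite /residual.
congr (_ - _ * _); apply: eq_bigr => i' _; apply: eq_bigr => j' hb.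
by rewrite (h _ _ _ _ hb).
Qed.

Lemma solve_iter_stable p f (i j : I) : (i <= j)%N -> (n - width i j <= f)%N ->
  solve_iter f.+1 p i j = solve_iter f p i j.
Proof.
elim: f i j => [|f IH] i j hij hf; first by have := ltn_ord j; rewrite /width in hf; lia.
rewrite [LHS]/= [RHS]/=; congr solve_pair; apply: residual_ext => i' j' k m.
rewrite /wider => /and4P[h1 h2 h3 h4]; apply: IH => //.
by rewrite /width in hf h4 *; have := ltn_ord j'; lia.
Qed.

Lemma solve_iter_solve p f (i j : I) : (i <= j)%N -> (n - width i j <= f)%N ->
  solve_iter f p i j = solve p i j.
Proof.
move=> hij hf; set f0 := (n - width i j)%N.
have from_f0 d : solve_iter (f0 + d) p i j = solve_iter f0 p i j.
  elim: d => [|d IHd]; first by rewrite addn0.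
  by rewrite addnS solve_iter_stable // ?IHd //; apply: leq_trans (leq_addr _ _).
have := from_f0 (f - f0)%N; rewrite subnKC // => ->.
by have := from_f0 (n - f0)%N; rewrite subnKC ?leq_subr // /solve => ->.
Qed.

Lemma solve_fix p (i j : I) : (i <= j)%N -> solve p i j = solve_pair i j (residual (solve p) p i j).
Proof.
move=> hij; have n_gt0 : (0 < n)%N by apply: leq_ltn_trans (ltn_ord i).
rewrite {1}/solve -(prednK n_gt0) /=; congr solve_pair; apply: residual_ext => i' j' k m.
rewrite /wider => /and4P[h1 h2 h3 h4]; apply: solve_iter_solve => //.
by rewrite /width in h4 *; lia.
Qed.

Lemma natS_neq0 k : (k.+1)%:R != 0 :> C.
Proof. by rewrite pnatr_eq0. Qed.

Lemma solve_pair_correct (i j l : I) (c : I -> I -> I -> C) :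
  (i <= l <= j)%N -> ((i < j)%N -> c i i j != 0 /\ c i j j != 0) ->
  mult i l j * triple (solve_pair i j c) i l j = c i l j.
Proof.
move=> /andP[hil hlj] pivots; rewrite /mult /mult3 /triple /solve_pair.
have h3 := natS_neq0 2; have h6 := natS_neq0 5.
have [eij|nij] := eqVneq i j.
  have eli : l = i.
    by move: hlj; rewrite -eij => hli; apply: val_inj; apply/eqP; rewrite eqn_leq hil hli.
  by subst; rewrite !eqxx /= !mulr1 mul1r.
have hij : (i < j)%N by rewrite ltn_neqAle (leq_trans hil hlj) andbT.
have [c1 c2] := pivots hij.
have nji : (j == i) = false by rewrite eq_sym (negbTE nij).
rewrite (negbTE (nij : (nat_of_ord i != nat_of_ord j))) /= nji.
have [eli|nli] := eqVneq l i.
  by subst l; rewrite !eqxx /=; field; rewrite ?c1 ?c2 ?h3 ?h6.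
have nil' : (val i == val l) = false by rewrite eq_sym; exact: negbTE nli.
rewrite nil' !eqxx /=.
have [elj|nlj] := eqVneq l j.
  by subst l; rewrite !eqxx /=; field; rewrite ?c1 ?c2 ?h3 ?h6.
rewrite (negbTE (nlj : (nat_of_ord l != nat_of_ord j))) /=.
by field; rewrite ?c1 ?c2 ?h3 ?h6.
Qed.

End Solver.

Section Existence.
Variable C : numClosedFieldType.
Variable n : nat.
Local Notation I := 'I_n.

Definition covers (i j k m : I) : bool := [&& (i <= j)%N, (i <= k)%N & (m <= j)%N].

Lemma sum_covers_split (k m : I) (F : I -> I -> C) : (k <= m)%N ->
  \sum_(i < n) \sum_(j < n | covers i j k m) F i j =
  F k m + \sum_(i < n) \sum_(j < n | wider k m i j k m) F i j.
Proof.
move=> hkm; rewrite !pair_big_dep /= (bigD1 (k, m)) /=; last first.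
  by rewrite /covers hkm !leqnn.
congr (_ + _); apply: eq_bigl => -[a b] /=.
rewrite /covers /wider /width xpair_eqE.
apply/idP/idP.
- move=> /andP[/and3P[h1 h2 h3] hne]; rewrite h1 h2 h3 /=.
  have : (a != k) || (b != m) by rewrite -negb_and.
  by rewrite -!(inj_eq val_inj) /= => /orP[/eqP|/eqP] ?; lia.
- move=> /and4P[h1 h2 h3 h4]; rewrite h1 h2 h3 /=.
  rewrite negb_and; case: (eqVneq a k) => [ak|] //=; subst a.
  by apply/negP => /eqP bm; subst b; rewrite ltnn in h4.
Qed.

Definition rep_of (p : cform C n) (i j k : I) : C :=
  3.-root (solve p i j).1 * (solve p i j).2 k.

Definition pivots_nonzero (p : cform C n) := forall i j : I, (i < j)%N ->
  residual (solve p) p i j i i j != 0 /\ residual (solve p) p i j i j j != 0.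

Lemma gram_rep_of p (a b c : I) : (a <= b <= c)%N ->
  gram (rep_of p) a b c = \sum_(i < n) \sum_(j < n | covers i j a c) triple (solve p i j) a b c.
Proof.
move=> /andP[hab hbc]; rewrite /gram; apply: eq_bigr => i _.
rewrite big_mkcond [RHS]big_mkcond; apply: eq_bigr => j _.
rewrite /covers /tcoef /in_range.
case h1: (i <= j)%N => //=.
case h2: (i <= a)%N => /=; last by rewrite mul0r mul0r.
case h3: (c <= j)%N => /=; last first.
  case: ifP => _; last by rewrite !mul0r.
  case: ifP => _; last by rewrite mulr0 mul0r.
  by rewrite andbF mulr0.
have -> : (a <= j)%N by apply: leq_trans hab (leq_trans hbc h3).
have -> : (i <= b)%N by apply: leq_trans h2 hab.
have -> : (b <= j)%N by apply: leq_trans hbc h3.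
have -> : (i <= c)%N by apply: leq_trans h2 (leq_trans hab hbc).
rewrite /= /rep_of /triple.
have root_cube : (3.-root (solve p i j).1) ^+ 3 = (solve p i j).1 by rewrite rootCK.
set r := 3.-root (solve p i j).1 in root_cube *; rewrite -root_cube; ring.
Qed.

Lemma rep_of_is_rep p : pivots_nonzero p -> is_rep p (rep_of p).
Proof.
move=> hp x; rewrite -/(rep_value (rep_of p) x) eval_form_sorted rep_value_sorted.
apply: eq_bigr => a _; apply: eq_bigr => b _; apply: eq_bigr => c _.
case: ifP => // habc; congr (_ * _).
have hac : (a <= c)%N by case/andP: habc; apply: leq_trans.
have solved := solve_pair_correct habc (hp a c).
rewrite -solve_fix // in solved.
rewrite gram_rep_of // sum_covers_split // mulrDr -/(mult C a b c) solved /residual; ring.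
Qed.

End Existence.

Section Uniqueness.
Variable C : numClosedFieldType.
Variable n : nat.
Local Notation I := 'I_n.

Definition rep_value3 (t : I -> I -> I -> C) (a b c : I) (al be ga : C) : C :=
  rep_value t (fun o => al * (o == a)%:R + be * (o == b)%:R + ga * (o == c)%:R).

Lemma sum_delta (F : I -> C) (a : I) : \sum_(k < n) F k * (k == a)%:R = F a.
Proof.
rewrite (bigD1 a) //= eqxx mulr1 big1 ?addr0 // => k /negbTE ->.
by rewrite mulr0.
Qed.

Lemma rep_value3E (t : I -> I -> I -> C) (a b c : I) (al be ga : C) :
  rep_value3 t a b c al be ga = \sum_(pr : I * I | (pr.1 <= pr.2)%N)
    (al * tcoef t pr.1 pr.2 a + be * tcoef t pr.1 pr.2 b + ga * tcoef t pr.1 pr.2 c) ^+ 3.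
Proof.
rewrite /rep_value3 /rep_value pair_big_dep /=; apply: eq_bigr => -[i j] _ /=.
rewrite linfE; congr (_ ^+ 3).
rewrite (eq_bigr (fun k => al * (tcoef t i j k * (k == a)%:R)
   + be * (tcoef t i j k * (k == b)%:R) + ga * (tcoef t i j k * (k == c)%:R)));
  last by move=> k _; ring.
by rewrite !big_split /= -!mulr_sumr !sum_delta.
Qed.

Lemma gram_pairs (t : I -> I -> I -> C) (a b c : I) : gram t a b c =
  \sum_(pr : I * I | (pr.1 <= pr.2)%N)
    tcoef t pr.1 pr.2 a * tcoef t pr.1 pr.2 b * tcoef t pr.1 pr.2 c.
Proof. by rewrite /gram pair_big_dep. Qed.

Lemma gram_polarization (t : I -> I -> I -> C) (a b c : I) : 6%:R * gram t a b c =
  rep_value3 t a b c 1 1 1 - rep_value3 t a b c 1 1 0 - rep_value3 t a b c 1 0 1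
  - rep_value3 t a b c 0 1 1 + rep_value3 t a b c 1 0 0 + rep_value3 t a b c 0 1 0
  + rep_value3 t a b c 0 0 1.
Proof.
rewrite !rep_value3E gram_pairs -!sumrB -!big_split /= mulr_sumr.
by apply: eq_bigr => pr _; ring.
Qed.

Lemma gram_determined (t t' : I -> I -> I -> C) :
  (forall x, rep_value t x = rep_value t' x) -> forall a b c, gram t a b c = gram t' a b c.
Proof.
by move=> hV a b c; apply: (mulfI (natS_neq0 C 5)); rewrite !gram_polarization /rep_value3 !hV.
Qed.

Lemma triple_products_rigid (i j : I) (u u' : I -> C) : (i <= j)%N ->
  (forall l : I, (i <= l <= j)%N -> u i * u l * u j = u' i * u' l * u' j) ->
  ((i < j)%N -> u i != 0 /\ u j != 0) ->
  exists z : C, z ^+ 3 = 1 /\ forall k : I, (i <= k <= j)%N -> u' k = z * u k.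
Proof.
move=> hij h hnz.
have [eij|nij] := eqVneq i j.
  subst j; have cubes := h i ltac:(by rewrite leqnn).
  have ki : forall k : I, (i <= k <= i)%N -> k = i.
    by move=> k /andP[h1 h2]; apply: val_inj; apply/eqP; rewrite eqn_leq h1 h2.
  have [ui0|ui0] := eqVneq (u i) 0.
    exists 1; split => [|k /ki ->]; first by rewrite expr1n.
    rewrite ui0 mulr0.
    have : u' i ^+ 3 == 0 by rewrite -[_ ^+ 3]/(u' i * (u' i * u' i)) mulrA -cubes ui0 !mul0r.
    by rewrite expf_eq0 /= => /eqP.
  exists (u' i / u i); split => [|k /ki ->]; last by rewrite divfK.
  rewrite expr_div_n -[_ ^+ 3]/(u' i * (u' i * u' i)) mulrA -cubes.
  by rewrite -[_ ^+ 3]/(u i * (u i * u i)) mulrA divff // !mulf_neq0.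
have hij' : (i < j)%N by rewrite ltn_neqAle hij andbT.
have [ui0 uj0] := hnz hij'.
have cube_i := h i ltac:(by rewrite leqnn hij).
have cube_j := h j ltac:(by rewrite leqnn hij).
have u'i0 : u' i != 0.
  apply/negP => /eqP e; move: cube_i; rewrite e !mul0r => /eqP; rewrite !mulf_eq0.
  by rewrite (negbTE ui0) (negbTE uj0).
have u'j0 : u' j != 0.
  apply/negP => /eqP e; move: cube_i; rewrite e !mulr0 => /eqP; rewrite !mulf_eq0.
  by rewrite (negbTE ui0) (negbTE uj0).
set z := u' i / u i.
have z_i : u' i = z * u i by rewrite /z divfK.
have ratio : u i * u' j = u' i * u j.
  apply: (@mulIf _ (u i * u' i * u j * u' j)); first by rewrite !mulf_neq0.
  transitivity ((u i * u i * u j) * (u' i * u' j * u' j)); first by ring.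
  rewrite cube_i -cube_j; ring.
have z_j : u' j = z * u j by apply: (mulfI ui0); rewrite ratio /z; field.
have z3 : z ^+ 3 = 1.
  apply: (@mulfI _ (u i * u i * u j)); first by rewrite !mulf_neq0.
  transitivity (u' i * u' i * u' j); first by rewrite z_i z_j; ring.
  by rewrite -cube_i mulr1.
exists z; split => // k hk.
have cube_k := h k hk; rewrite z_i z_j in cube_k.
have z2_k : u k = z ^+ 2 * u' k.
  apply: (mulIf (mulf_neq0 ui0 uj0)).
  transitivity (u i * u k * u j); first by ring.
  by rewrite cube_k; ring.
by rewrite z2_k mulrA -exprS z3 mul1r.
Qed.

(* For a pair (i, j), the
   strictly wider pairs contribute equally to gram t i l j by induction, so
   the products t_{ij,i} t_{ij,l} t_{ij,j} agree. *)
Lemma gram_rep_unique (t t' : I -> I -> I -> C)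
  (hG : forall a b c, gram t a b c = gram t' a b c)
  (hp : forall i j : I, (i < j)%N -> t i j i != 0 /\ t i j j != 0) :
  forall i j : I, (i <= j)%N ->
  exists z : C, z ^+ 3 = 1 /\ forall k : I, (i <= k <= j)%N -> t' i j k = z * t i j k.
Proof.
suff H : forall e (i j : I), (i <= j)%N -> (n - width i j <= e)%N ->
  exists z : C, z ^+ 3 = 1 /\ forall k : I, (i <= k <= j)%N -> t' i j k = z * t i j k.
  by move=> i j hij; exact: H _ _ _ hij (leqnn _).
elim=> [|e IH] i j hij he; first by have := ltn_ord j; rewrite /width in he; lia.
apply: triple_products_rigid => //; last by move=> /hp.
move=> l /andP[hil hlj].
have E := hG i l j.
rewrite !gram_pairs (bigD1 (i, j)) //= [RHS](bigD1 (i, j)) //= in E.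
have wider_equal :
  \sum_(pr : I * I | (pr.1 <= pr.2)%N && (pr != (i, j)))
     tcoef t pr.1 pr.2 i * tcoef t pr.1 pr.2 l * tcoef t pr.1 pr.2 j =
  \sum_(pr : I * I | (pr.1 <= pr.2)%N && (pr != (i, j)))
     tcoef t' pr.1 pr.2 i * tcoef t' pr.1 pr.2 l * tcoef t' pr.1 pr.2 j.
  apply: eq_bigr => -[a b] /= /andP[hab hne].
  rewrite /tcoef /in_range.
  case ha: (a <= i)%N; last by rewrite /= !mul0r.
  case hb: (j <= b)%N; last by rewrite !andbF !mulr0.
  have hsp : (n - width a b <= e)%N.
    move: hne; rewrite xpair_eqE negb_and -!(inj_eq val_inj) /= => hne.
    rewrite /width in he *; have := ltn_ord b.
    by case/orP: hne => /eqP hne; lia.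
  have [z [z3 hz]] := IH a b hab hsp.
  have hal : (a <= l)%N := leq_trans ha hil.
  have hlb : (l <= b)%N := leq_trans hlj hb.
  have haj : (a <= j)%N := leq_trans ha hij.
  have hib : (i <= b)%N := leq_trans hij hb.
  rewrite hal hlb haj hib /= !hz ?hal ?hlb ?haj ?hib ?ha ?hb //.
  rewrite (_ : z * t a b i * (z * t a b l) * (z * t a b j) =
                z ^+ 3 * (t a b i * t a b l * t a b j)); last by ring.
  by rewrite z3 mul1r.
rewrite wider_equal in E; move/addIr: E.
by rewrite /tcoef /in_range !leqnn hij hil hlj.
Qed.

End Uniqueness.

(* At the cubic form form_ones, whose representation has all
   coefficients equal to 1, the solver returns (1, 1, ..., 1) on every pair and
   the pivots are 3.  The solver's output is a rational function of p near
   form_ones, so the pivots are nonzero on a basic Zariski-open set. *)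
Section Genericity.
Variable C : numClosedFieldType.
Variable n : nat.
Local Notation I := 'I_n.
Local Notation mult := (mult C).

(* Coefficient of x_a x_b x_c (a <= b <= c) in sum_{i <= j} (x_i + ... + x_j)^3. *)
Definition form_ones : cform C n := fun m =>
  mult (val m).1.1 (val m).1.2 (val m).2 *
  \sum_(i < n) \sum_(j < n | covers i j (val m).1.1 (val m).2) 1.

Lemma coef_form_ones (a b c : I) : (a <= b <= c)%N ->
  coef form_ones a b c = mult a b c * \sum_(i < n) \sum_(j < n | covers i j a c) 1.
Proof.
move=> h; rewrite /coef; case: insubP => [m _ hm|]; first by rewrite /form_ones hm.
by rewrite h.
Qed.

Lemma coef_rational (a b c : I) : rational_at form_ones (fun p => coef p a b c).
Proof.
rewrite /coef; case: (insub (a, b, c)) => [m|]; first exact: rational_var.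
exact: rational_const.
Qed.

Lemma mult_iii (i : I) : mult i i i = 1.
Proof. by rewrite /mult /mult3 eqxx. Qed.
Lemma mult_iij (i j : I) : i != j -> mult i i j = 3%:R.
Proof. by move=> h; rewrite /mult /mult3 (negbTE (h : nat_of_ord i != nat_of_ord j)) eqxx. Qed.
Lemma mult_ijj (i j : I) : i != j -> mult i j j = 3%:R.
Proof.
by move=> h; rewrite /mult /mult3 (negbTE (h : nat_of_ord i != nat_of_ord j)) eqxx orbT.
Qed.
Lemma mult_ikj (i k j : I) : i != j -> i != k -> k != j -> mult i k j = 6%:R.
Proof.
move=> h1 h2 h3; rewrite /mult /mult3 (negbTE (h1 : nat_of_ord i != nat_of_ord j)).
by rewrite (negbTE (h2 : nat_of_ord i != nat_of_ord k)) (negbTE (h3 : nat_of_ord k != nat_of_ord j)).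
Qed.

Definition solve_regular (i j : I) : Prop :=
  [/\ rational_at form_ones (fun p => (solve p i j).1),
      forall k, rational_at form_ones (fun p => (solve p i j).2 k),
      (solve form_ones i j).1 = 1 &
      forall k : I, (i <= k <= j)%N -> (solve form_ones i j).2 k = 1].

Definition wider_regular (i j : I) : Prop :=
  forall i' j' k m, wider i j i' j' k m -> solve_regular i' j'.

Lemma residual_rational (i j k l m : I) : wider_regular i j ->
  rational_at form_ones (fun p => residual (solve p) p i j k l m).
Proof.
move=> hwider; apply: rational_add; first exact: coef_rational.
apply: (rational_eq (g := fun p => - mult k l m *
   \sum_(i' < n) \sum_(j' < n | wider i j i' j' k m) triple (solve p i' j') k l m));
  last by move=> p; rewrite mulNr.
apply: rational_mul; first exact: rational_const.
apply: rational_sum => i' _; apply: rational_sum => j' hw.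
have [s_rat u_rat _ _] := hwider _ _ _ _ hw.
by rewrite /triple; do !apply: rational_mul.
Qed.

(* At form_ones the wider pairs contribute 1 each, leaving the contribution of
   pair (i, j) itself. *)
Lemma residual_form_ones (i j l : I) : wider_regular i j -> (i <= l <= j)%N ->
  residual (solve form_ones) form_ones i j i l j = mult i l j.
Proof.
move=> hwider hl; have hij : (i <= j)%N by case/andP: hl; apply: leq_trans.
rewrite /residual coef_form_ones // (sum_covers_split (fun _ _ => 1)) //.
suff -> : \sum_(i' < n) \sum_(j' < n | wider i j i' j' i j) triple (solve form_ones i' j') i l j =
          \sum_(i' < n) \sum_(j' < n | wider i j i' j' i j) 1 by ring.
apply: eq_bigr => i' _; apply: eq_bigr => j' hw.
have [_ _ s1 u1] := hwider _ _ _ _ hw.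
move: hw => /and4P[_ h2 h3 _]; case/andP: hl => hl1 hl2.
by rewrite /triple s1 !u1 ?mulr1 // ?h2 ?(leq_trans hij h3) ?(leq_trans h2 hl1)
   ?(leq_trans hl2 h3) ?(leq_trans h2 hij) ?h3.
Qed.

Lemma solve_regular_all (i j : I) : (i <= j)%N -> solve_regular i j.
Proof.
suff H : forall e (i j : I), (i <= j)%N -> (n - width i j <= e)%N -> solve_regular i j.
  by move=> hij; exact: H _ _ _ hij (leqnn _).
elim=> [|e IH] {}i {}j hij he; first by have := ltn_ord j; rewrite /width in he; lia.
have hwider : wider_regular i j.
  move=> i' j' k m /and4P[h1 h2 h3 h4]; apply: IH => //.
  by rewrite /width in he h4 *; have := ltn_ord j'; lia.
have res_rat := fun k l m => residual_rational k l m hwider.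
have res_ones := fun l => residual_form_ones (l := l) hwider.
have Dfix := fun p => solve_fix p hij.
have [eij|nij] := eqVneq i j.
  subst j; split.
  - by apply: rational_eq (res_rat i i i) _ => p; rewrite Dfix /solve_pair eqxx.
  - move=> k; apply: rational_eq (rational_const _ 1) _ => p.
    by rewrite Dfix /solve_pair eqxx.
  - by rewrite Dfix /solve_pair eqxx /= res_ones ?leqnn // mult_iii.
  - by move=> k _; rewrite Dfix /solve_pair eqxx.
have piv1_rat := rational_mul (res_rat i i j) (rational_const _ 3%:R^-1).
have piv2_rat := rational_mul (res_rat i j j) (rational_const _ 3%:R^-1).
have piv1_ones : residual (solve form_ones) form_ones i j i i j / 3%:R = 1.
  by rewrite res_ones ?leqnn ?hij // mult_iij // divff // natS_neq0.
have piv2_ones : residual (solve form_ones) form_ones i j i j j / 3%:R = 1.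
  by rewrite res_ones ?leqnn ?hij // mult_ijj // divff // natS_neq0.
have piv1_inv := rational_inv piv1_rat ltac:(by rewrite /= piv1_ones oner_neq0).
have piv2_inv := rational_inv piv2_rat ltac:(by rewrite /= piv2_ones oner_neq0).
split.
- apply: rational_eq (rational_mul (rational_mul piv1_rat piv1_rat) piv2_inv) _ => p.
  by rewrite Dfix /solve_pair (negbTE nij) /= expr2.
- move=> k; have [eki|nki] := eqVneq k i.
    by apply: rational_eq (rational_const _ 1) _ => p; rewrite Dfix /solve_pair (negbTE nij) /= eki eqxx.
  have [ekj|nkj] := eqVneq k j.
    apply: rational_eq (rational_mul piv2_rat piv1_inv) _ => p.
    by rewrite Dfix /solve_pair (negbTE nij) /= (negbTE nki) ekj eqxx.
  apply: rational_eq (rational_mul (rational_mul (res_rat i k j)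
                        (rational_const _ 6%:R^-1)) piv1_inv) _ => p.
  by rewrite Dfix /solve_pair (negbTE nij) /= (negbTE nki) (negbTE nkj).
- by rewrite Dfix /solve_pair (negbTE nij) /= piv1_ones piv2_ones expr1n divr1.
- move=> k hk; rewrite Dfix /solve_pair (negbTE nij) /=.
  have [//|nki] := eqVneq k i.
  have [_|nkj] := eqVneq k j; first by rewrite piv1_ones piv2_ones divr1.
  have nik : i != k by rewrite eq_sym.
  by rewrite piv1_ones divr1 res_ones // mult_ikj // divff // natS_neq0.
Qed.

Lemma pivots_nonzero_generic : open_at form_ones (@pivots_nonzero C n).
Proof.
apply: open_at_all => i; apply: open_at_all => j.
case hij: (i < j)%N; last by apply: open_at_imp (open_at_true _) _.
have nij : i != j by rewrite neq_ltn hij.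
have hwider : wider_regular i j.
  by move=> i' j' k m /and4P[h1 _ _ _]; exact: solve_regular_all.
have piv1 := rational_nonzero (residual_rational i i j hwider).
have piv2 := rational_nonzero (residual_rational i j j hwider).
rewrite /= !residual_form_ones ?leqnn ?(ltnW hij) // mult_iij ?mult_ijj // in piv1 piv2.
by apply: open_at_imp (open_at_and (piv1 (natS_neq0 _ 2)) (piv2 (natS_neq0 _ 2))) _ => p [].
Qed.

(* The end coefficients of rep_of p are nonzero: the solver sets u_i = 1 and
   u_j = piv2 / piv1, with s = piv1^2 / piv2. *)
Lemma rep_of_ends_nonzero (p : cform C n) : pivots_nonzero p ->
  forall i j : I, (i < j)%N -> rep_of p i j i != 0 /\ rep_of p i j j != 0.
Proof.
move=> hp i j hij; have [piv1 piv2] := hp i j hij.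
have nij : i != j by rewrite neq_ltn hij.
have n3 := natS_neq0 C 2.
rewrite /rep_of solve_fix ?(ltnW hij) // /solve_pair (negbTE nij) /= eqxx.
have nji : (j == i) = false by rewrite eq_sym (negbTE nij).
rewrite nji eqxx.
have g1 : residual (solve p) p i j i i j / 3%:R != 0 by rewrite mulf_neq0 ?invr_neq0.
have g2 : residual (solve p) p i j i j j / 3%:R != 0 by rewrite mulf_neq0 ?invr_neq0.
have r0 : 3.-root ((residual (solve p) p i j i i j / 3%:R) ^+ 2 /
                   (residual (solve p) p i j i j j / 3%:R)) != 0.
  by rewrite rootC_eq0 // mulf_neq0 ?expf_neq0 ?invr_neq0.
by split; rewrite ?mulr1 // mulf_neq0 // mulf_neq0 ?invr_neq0.
Qed.

End Genericity.

(* Off the zero set of the polynomial certifying pivots_nonzero_generic, rep_of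
   is a representation, and any other representation has the same gram values,
   hence agrees with it up to cube roots of unity. *)
Theorem theorem1p4 (C : numClosedFieldType) (n : nat) (hn : (1 <= n)%N) :
  general (fun p : cform C n => unique_rep p).
Proof.
have [Q [Q_ones Q_pivots]] := @pivots_nonzero_generic C n.
exists Q; split; first by exists (@form_ones C n).
move=> p /Q_pivots hp; exists (rep_of p); split; first exact: rep_of_is_rep.
move=> t' ht' i j hij.
have same_value x : rep_value (rep_of p) x = rep_value t' x.
  by rewrite /rep_value -(rep_of_is_rep hp x) ht'.
exact: gram_rep_unique (gram_determined same_value) (rep_of_ends_nonzero hp) i j hij.
Qed.
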